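(* Let $a>0$, $\gamma>1$, $b>0$, and set $v_{1,1}=a$, $v_{2,1}=\gamma a$, $w_{1,1}=w_{2,1}=b$. Then $2\omega_-(\vartheta)\neq\omega_-(2\vartheta)$ for all $\vartheta\in(-\pi,\pi]$.
   Context: With $c_i:=2v_{i,1}+w_{i,1}$, for $\vartheta\in\mathbb R$ define $$\omega_\pm(\vartheta):=\sqrt{\tfrac12\Big(c_1+c_2\pm\sqrt{(c_1-c_2)^2+8v_{1,1}v_{2,1}(\cos\vartheta+1)}\Big)}.$$ *)

From Stdlib Require Import Reals.
Open Scope R_scope.

Definition cc (v w : R) : R := 2 * v + w.

Definition omega_minus (v11 w11 v21 w21 th : R) : R :=
  let c1 := cc v11 w11 in
  let c2 := cc v21 w21 in
  sqrt ((1/2) * (c1 + c2 - sqrt ((c1 - c2)^2 + 8 * v11 * v21 * (cos th + 1)))).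

From Stdlib Require Import Reals Lra Psatz.
Open Scope R_scope.

(* For nonnegative couplings the radicand of omega_minus
   is nonnegative, so omega_minus(th)^2 = (c1 + c2 - sqrt D(th)) / 2, where D
   is the discriminant.  When w11 = w21 = b the discriminant only involves
   v1 = v11, v2 = v21 and c = cos th:
     sqrt D(th)  = 2 R   with R^2 = v1^2 + v2^2 + 2 v1 v2 c,
     D(2 th)     = 4 (v1 - v2)^2 + 16 v1 v2 c^2.
   Squaring 2 omega_minus(th) = omega_minus(2 th) therefore gives
     sqrt D(2 th) = 2 (4 R - 3 (v1 + v2)) - 6 b,
   so 4 R > 3 (v1 + v2) and sqrt D(2 th) < 2 (4 R - 3 (v1 + v2)) since b > 0.
   The polynomial inequality [doubling_bound] says exactly the opposite:
   (4 R - 3 (v1 + v2))^2 <= D(2 th) / 4.  It follows from an explicit quartic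
   identity whose right-hand side is a square times a nonnegative quadratic. *)

Lemma omega_minus_sq (v11 w11 v21 w21 th : R) :
  0 <= v11 -> 0 <= w11 -> 0 <= v21 -> 0 <= w21 ->
  (omega_minus v11 w11 v21 w21 th) ^ 2 =
  (1/2) * (cc v11 w11 + cc v21 w21
           - sqrt ((cc v11 w11 - cc v21 w21) ^ 2
                   + 8 * v11 * v21 * (cos th + 1))).
Proof.
  intros H1 H2 H3 H4. unfold omega_minus. apply pow2_sqrt.
  set (c1 := cc v11 w11). set (c2 := cc v21 w21).
  assert (Hc1 : 2 * v11 <= c1) by (unfold c1, cc; lra).
  assert (Hc2 : 2 * v21 <= c2) by (unfold c2, cc; lra).
  assert (Hdisc : (c1 - c2) ^ 2 + 8 * v11 * v21 * (cos th + 1) <= (c1 + c2) ^ 2).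
  { destruct (COS_bound th) as [_ Hhi].
    assert (v11 * v21 * (cos th + 1) <= v11 * v21 * 2)
      by (apply Rmult_le_compat_l; [apply Rmult_le_pos |]; lra).
    assert (4 * v11 * v21 <= c1 * c2) by nra.
    nra. }
  apply sqrt_le_1_alt in Hdisc. rewrite sqrt_pow2 in Hdisc by lra. lra.
Qed.

(* Law-of-cosines quantity: v1^2 + v2^2 + 2 v1 v2 cos th >= (v1 - v2)^2 >= 0. *)
Lemma cosine_law_nonneg (v1 v2 th : R) :
  0 <= v1 -> 0 <= v2 -> 0 <= v1 ^ 2 + v2 ^ 2 + 2 * v1 * v2 * cos th.
Proof.
  intros H1 H2. destruct (COS_bound th) as [Hlo _].
  assert (0 <= v1 * v2 * (cos th + 1)) by (apply Rmult_le_pos; nra).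
  pose proof (pow2_ge_0 (v1 - v2)). nra.
Qed.

Lemma sqrt_disc_equal_w (v1 v2 w th : R) :
  0 <= v1 -> 0 <= v2 ->
  sqrt ((cc v1 w - cc v2 w) ^ 2 + 8 * v1 * v2 * (cos th + 1)) =
  2 * sqrt (v1 ^ 2 + v2 ^ 2 + 2 * v1 * v2 * cos th).
Proof.
  intros H1 H2.
  pose proof (cosine_law_nonneg v1 v2 th H1 H2) as Hpos.
  replace ((cc v1 w - cc v2 w) ^ 2 + 8 * v1 * v2 * (cos th + 1))
    with ((2 * 2) * (v1 ^ 2 + v2 ^ 2 + 2 * v1 * v2 * cos th)) by (unfold cc; ring).
  rewrite sqrt_mult by lra. rewrite sqrt_square by lra. reflexivity.
Qed.

Lemma disc_double_angle (v1 v2 w th : R) :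
  (cc v1 w - cc v2 w) ^ 2 + 8 * v1 * v2 * (cos (2 * th) + 1) =
  4 * (v1 - v2) ^ 2 + 16 * v1 * v2 * (cos th) ^ 2.
Proof. rewrite cos_2a_cos. unfold cc. ring. Qed.

(* The quartic identity behind the obstruction (with c eliminated through
   2 p q c = R^2 - p^2 - q^2). *)
Lemma doubling_identity (p q R : R) :
  p * q * (q - p) ^ 2 + (R ^ 2 - p ^ 2 - q ^ 2) ^ 2
    - p * q * (4 * R - 3 * (p + q)) ^ 2 =
  (R - (p + q)) ^ 2 *
  ((R - (p + q)) ^ 2 + 4 * (p + q) * (R - (p + q)) + 4 * (p ^ 2 - p * q + q ^ 2)).
Proof. ring. Qed.

(* The quadratic factor of [doubling_identity] is nonnegative in the regime
   4 R > 3 (p + q): it then exceeds (R - (p + q))^2 + 3 (p - q)^2. *)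
Lemma doubling_factor_nonneg (p q R : R) :
  0 < p + q -> 3 * (p + q) < 4 * R ->
  0 <= (R - (p + q)) ^ 2 + 4 * (p + q) * (R - (p + q)) + 4 * (p ^ 2 - p * q + q ^ 2).
Proof.
  intros Hs HR.
  assert (- (p + q) ^ 2 < 4 * (p + q) * (R - (p + q))) by nra.
  assert (E : (p + q) ^ 2 = p ^ 2 + 2 * p * q + q ^ 2) by ring.
  assert (F : (p - q) ^ 2 = p ^ 2 - 2 * p * q + q ^ 2) by ring.
  pose proof (pow2_ge_0 (R - (p + q))). pose proof (pow2_ge_0 (p - q)).
  lra.
Qed.

Lemma doubling_bound (p q R c : R) :
  0 < p -> 0 < q -> R ^ 2 = p ^ 2 + q ^ 2 + 2 * p * q * c ->
  3 * (p + q) < 4 * R ->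
  (4 * R - 3 * (p + q)) ^ 2 <= (p - q) ^ 2 + 4 * p * q * c ^ 2.
Proof.
  intros Hp Hq HR Hlt.
  assert (Hpq : 0 < p * q) by nra.
  assert (Hc : R ^ 2 - p ^ 2 - q ^ 2 = 2 * p * q * c) by lra.
  pose proof (doubling_identity p q R) as Eid. rewrite Hc in Eid.
  pose proof (doubling_factor_nonneg p q R ltac:(lra) Hlt) as Hf.
  assert (Hprod : 0 <= p * q * ((p - q) ^ 2 + 4 * p * q * c ^ 2
                               - (4 * R - 3 * (p + q)) ^ 2)).
  { replace (p * q * ((p - q) ^ 2 + 4 * p * q * c ^ 2 - (4 * R - 3 * (p + q)) ^ 2))
      with ((R - (p + q)) ^ 2 *
            ((R - (p + q)) ^ 2 + 4 * (p + q) * (R - (p + q))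
             + 4 * (p ^ 2 - p * q + q ^ 2))) by (rewrite <- Eid; ring).
    apply Rmult_le_pos; [apply pow2_ge_0 | exact Hf]. }
  nra.
Qed.

Lemma omega_minus_no_doubling (v1 v2 b th : R) :
  0 < v1 -> 0 < v2 -> 0 < b ->
  2 * omega_minus v1 b v2 b th <> omega_minus v1 b v2 b (2 * th).
Proof.
  intros H1 H2 Hb Heq.
  assert (Hsq : 4 * (omega_minus v1 b v2 b th) ^ 2 = (omega_minus v1 b v2 b (2 * th)) ^ 2)
    by (rewrite <- Heq; ring).
  rewrite !omega_minus_sq in Hsq by lra.
  rewrite sqrt_disc_equal_w, disc_double_angle in Hsq by lra.
  pose proof (cosine_law_nonneg v1 v2 th ltac:(lra) ltac:(lra)) as HRpos.
  assert (Hr2pos : 0 <= 4 * (v1 - v2) ^ 2 + 16 * v1 * v2 * (cos th) ^ 2).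
  { pose proof (pow2_ge_0 (v1 - v2)). pose proof (pow2_ge_0 (cos th)).
    assert (0 <= v1 * v2 * (cos th) ^ 2) by (apply Rmult_le_pos; nra). nra. }
  pose proof (pow2_sqrt _ HRpos) as HR. pose proof (sqrt_pos (v1 ^ 2 + v2 ^ 2 + 2 * v1 * v2 * cos th)).
  pose proof (pow2_sqrt _ Hr2pos) as Hr2. pose proof (sqrt_pos (4 * (v1 - v2) ^ 2 + 16 * v1 * v2 * (cos th) ^ 2)).
  set (R := sqrt (v1 ^ 2 + v2 ^ 2 + 2 * v1 * v2 * cos th)) in *.
  set (r2 := sqrt (4 * (v1 - v2) ^ 2 + 16 * v1 * v2 * (cos th) ^ 2)) in *.
  unfold cc in Hsq.
  (* squaring the doubling relation makes sqrt D(2 th) affine in R *)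
  assert (Hrel : r2 = 2 * (4 * R - 3 * (v1 + v2)) - 6 * b) by lra.
  assert (Hlt : 3 * (v1 + v2) < 4 * R) by lra.
  pose proof (doubling_bound v1 v2 R (cos th) H1 H2 HR Hlt) as Hbound.
  assert (Hsmall : r2 < 2 * (4 * R - 3 * (v1 + v2))) by lra.
  nra.
Qed.

(* The theorem: the special case v11 = a, v21 = gamma a, w11 = w21 = b. *)
Theorem mainTheorem3 (a gamma b : R) (ha : 0 < a) (hg : 1 < gamma) (hb : 0 < b) :
  forall th : R, - PI < th <= PI ->
    2 * omega_minus a b (gamma * a) b th <> omega_minus a b (gamma * a) b (2 * th).
Proof.
  intros th _.
  apply omega_minus_no_doubling; [exact ha | nra | exact hb].
Qed.
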